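(* Let $n\ge 6$ be even, and let $d_*=(\epsilon_1,\dots,\epsilon_{n-1},h)$ and $d_*'=(\epsilon_1',\dots,\epsilon_{n-1}',h')$ be neighbors. Then there is no index $j\in[1,n-1]$ with $\epsilon_j=1$ and $\epsilon'_j=-1$, nor with $\epsilon_j=-1$ and $\epsilon'_j=1$.
   Context: Symbols are $[1,n]$; $\mathrm{dist}(a,b)$ is the minimum of the residues of $a-b$ and $b-a$ mod $n$ (in $[0,n-1]$). A Latin row is a permutation $(s_1,\dots,s_n)$ of $[1,n]$; its inner distance is $\min_j\mathrm{dist}(s_j,s_{j+1})$. Its extended difference row is $(\epsilon_1,\dots,\epsilon_{n-1},h)$ where, with $h_j\in[0,n-1]$, $h_j\equiv s_{j+1}-s_j\pmod n$ ($1\le j\le n-1$), $h_n\equiv s_1-s_n\pmod n$, $\epsilon_j=h_j-\frac n2$, $h=h_n-\frac n2$ (integers); for rows of inner distance $\frac n2-1$ each $\epsilon_j\in\{-1,0,1\}$. A Latin rectangle is a matrix over $[1,n]$ with no repeats in any row or column; its inner distance is the minimum of $\mathrm{dist}$ over symbols in horizontally or vertically adjacent cells. Two extended difference rows of Latin rows of inner distance $\frac n2-1$ are neighbors if there exist Latin rows $r,r'$ with these extended difference rows such that the $2\times n$ matrix with rows $r$ and $r'$ is a Latin rectangle of inner distance $\frac n2-1$. *)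

(* Symbols are natural numbers in [1,n]; rows are seqs of length n,
   indexed from 0 (position j+1 of the paper is index j here). *)
From mathcomp Require Import all_boot all_algebra.
Set Implicit Arguments. Unset Strict Implicit. Unset Printing Implicit Defensive.

Definition resid (n a b : nat) : nat := (a + n - b) %% n.

Definition dist (n a b : nat) : nat := minn (resid n a b) (resid n b a).

Definition latin_row (n : nat) (s : seq nat) : bool := perm_eq s (iota 1 n).

(* inner distance of a row: min_j dist(s_j, s_{j+1}), j = 1..n-1
   (n is a neutral element since every dist is < n) *)
Definition row_inner_dist (n : nat) (s : seq nat) : nat :=
  \big[minn/n]_(j < n.-1) dist n (nth 0 s j) (nth 0 s j.+1).

Definition ext_diff (n : nat) (s : seq nat) : seq int :=
  [seq (Posz (resid n (nth 0 s j.+1) (nth 0 s j)) - Posz n./2)%R | j <- iota 0 n.-1]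
  ++ [:: (Posz (resid n (nth 0 s 0) (nth 0 s n.-1)) - Posz n./2)%R].

Definition latin_rect2 (n : nat) (r r' : seq nat) : bool :=
  [&& latin_row n r, latin_row n r' &
      [forall j : 'I_n, nth 0 r j != nth 0 r' j]].

Definition rect2_inner_dist (n : nat) (r r' : seq nat) : nat :=
  minn (minn (row_inner_dist n r) (row_inner_dist n r'))
       (\big[minn/n]_(j < n) dist n (nth 0 r j) (nth 0 r' j)).

Definition neighbors (n : nat) (d d' : seq int) : Prop :=
  exists r r' : seq nat,
    [/\ latin_row n r, latin_row n r',
        row_inner_dist n r = n./2 - 1 & row_inner_dist n r' = n./2 - 1] /\
    [/\ ext_diff n r = d, ext_diff n r' = d',
        latin_rect2 n r r' & rect2_inner_dist n r r' = n./2 - 1].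

From mathcomp Require Import all_boot all_order all_algebra zify.
Set Implicit Arguments. Unset Strict Implicit. Unset Printing Implicit Defensive.
Import Order.TTheory.

(* Write n = 2m.  Two symbols are at distance at least m - 1 iff each lies within
   1 of the antipode of the other.  Translate the symbols so that r_j = 0; a step
   of difference m + 1 in r above a step of difference m - 1 in r' then forces
   the block [0 m+1; m+1 0], and the distance condition forces the columns
   [m; 1] to its left and [1; m] to its right.  In a rectangle containing the
   columns [0; m+1] and [1; m], a column [m; 1] has no further neighbour: that
   neighbour would have to be [n-1; m+2], whose entries are too close.  If the
   block is at the left border, following the symbols m, m - 1, ..., 2 of r
   forces r' to take the values n - 1, n - 2, ..., m + 1 below them, repeating
   m + 1.  Reversing and complementing both rows moves the block into the left
   half, and exchanging the rows exchanges the two signs. *)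

Definition far (m x y : nat) : bool := m.-1 <= (x - y) + (y - x) <= m.+1.

Lemma far_sym m x y : far m x y = far m y x.
Proof. by rewrite /far addnC. Qed.

Lemma residE n x y :
  y < x + n -> resid n y x = if x <= y then y - x else y + n - x.
Proof.
rewrite /resid => lt_yxn; have [->|n_gt0] := posnP n; first by rewrite modn0 addn0 if_same.
case: leqP => le_xy; last by rewrite modn_small //; lia.
have -> : y + n - x = y - x + n by lia.
by rewrite modnDr modn_small //; lia.
Qed.

Lemma resid_lt n x y : 0 < n -> resid n y x < n.
Proof. exact: ltn_pmod. Qed.

Lemma residnn n a : resid n a a = 0.
Proof. by rewrite /resid addKn modnn. Qed.

Section Translation.
Variables (n a : nat).
Hypothesis a_in : 0 < a <= n.

Lemma resid_inj x y : 0 < x <= n -> 0 < y <= n -> resid n x a = resid n y a -> x = y.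
Proof. by move=> hx hy; rewrite !residE; [repeat case: ifP; lia | lia | lia]. Qed.

Lemma resid_onto c : c < n -> exists2 x, 0 < x <= n & resid n x a = c.
Proof.
move=> lt_cn; exists (if a + c <= n then a + c else a + c - n); first by case: ifP; lia.
by rewrite residE; repeat case: ifP; lia.
Qed.

Lemma resid_translate x y : 0 < x <= n -> 0 < y <= n ->
  resid n (resid n y a) (resid n x a) = resid n y x.
Proof.
move=> hx hy; have ya_lt : resid n y a < n by apply: resid_lt; lia.
rewrite residE; last lia.
by rewrite !residE; [repeat case: ifP; lia | lia ..].
Qed.

Lemma far_translate m x y : n = m + m -> 0 < x <= n -> 0 < y <= n ->
  far m (resid n x a) (resid n y a) = far m x y.
Proof. by move=> n_mm hx hy; rewrite /far !residE; [repeat case: ifP; lia | lia | lia]. Qed.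

End Translation.

Lemma far_of_dist m x y : 0 < x <= m + m -> 0 < y <= m + m ->
  m.-1 <= dist (m + m) x y -> far m x y.
Proof.
by move=> hx hy; rewrite /dist /far leq_min !residE; [repeat case: ifP; lia | lia | lia].
Qed.

Section LatinRow.
Variables (n : nat) (r : seq nat).
Hypothesis r_latin : latin_row n r.

Lemma size_latin_row : size r = n.
Proof. by rewrite (perm_size r_latin) size_iota. Qed.

Lemma latin_row_nth k : k < n -> 0 < nth 0 r k <= n.
Proof.
move=> lt_kn; have : nth 0 r k \in r by rewrite mem_nth // size_latin_row.
by rewrite (perm_mem r_latin) mem_iota; lia.
Qed.

Lemma latin_row_inj k k' : k < n -> k' < n -> nth 0 r k = nth 0 r k' -> k = k'.
Proof.
have r_uniq : uniq r by rewrite (perm_uniq r_latin) iota_uniq.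
by move=> hk hk' /eqP; rewrite nth_uniq ?size_latin_row // => /eqP.
Qed.

Lemma latin_row_onto x : 0 < x <= n -> exists2 k, k < n & nth 0 r k = x.
Proof.
move=> hx; have xr : x \in r by rewrite (perm_mem r_latin) mem_iota; lia.
by exists (index x r); rewrite ?nth_index // -size_latin_row index_mem.
Qed.

End LatinRow.

Definition flip_row (n : nat) (r : seq nat) : seq nat := [seq n.+1 - x | x <- rev r].

Lemma nth_flip_row n r k : size r = n -> k < n ->
  nth 0 (flip_row n r) k = n.+1 - nth 0 r (n.-1 - k).
Proof.
move=> size_r lt_kn; rewrite (nth_map 0) ?size_rev ?size_r // nth_rev ?size_r //.
by congr (_ - nth _ _ _); lia.
Qed.

Lemma flip_row_iota n : flip_row n (iota 1 n) = iota 1 n.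
Proof.
apply: (@eq_from_nth _ 0); first by rewrite size_map size_rev.
rewrite size_map size_rev size_iota => k lt_kn.
by rewrite nth_flip_row ?size_iota // !nth_iota //; lia.
Qed.

Lemma latin_row_flip n r : latin_row n r -> latin_row n (flip_row n r).
Proof.
rewrite /latin_row -{2}flip_row_iota => r_perm.
by apply: perm_map; rewrite perm_rev perm_sym perm_rev perm_sym.
Qed.

Lemma resid_flip n x y : x <= n -> y <= n -> resid n (n.+1 - y) (n.+1 - x) = resid n x y.
Proof. by move=> hx hy; rewrite /resid; congr (_ %% _); lia. Qed.

Lemma far_flip m n x y : x <= n -> y <= n -> far m (n.+1 - x) (n.+1 - y) = far m x y.
Proof. by move=> hx hy; rewrite /far; lia. Qed.

Lemma bigmin_ord_le k (F : 'I_k -> nat) x i : \big[minn/x]_(j < k) F j <= F i.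
Proof. exact: (@bigmin_le _ nat). Qed.

Definition far_rectangle (m : nat) (r r' : seq nat) : Prop :=
  [/\ latin_row (m + m) r, latin_row (m + m) r',
      forall k, k.+1 < m + m -> far m (nth 0 r k) (nth 0 r k.+1),
      forall k, k.+1 < m + m -> far m (nth 0 r' k) (nth 0 r' k.+1) &
      forall k, k < m + m -> far m (nth 0 r k) (nth 0 r' k)].

Lemma far_rectangle_sym m r r' : far_rectangle m r r' -> far_rectangle m r' r.
Proof. by case=> *; split=> // k hk; rewrite far_sym; auto. Qed.

Lemma far_rectangle_of_inner_dist m r r' :
  latin_row (m + m) r -> latin_row (m + m) r' ->
  m.-1 <= rect2_inner_dist (m + m) r r' -> far_rectangle m r r'.
Proof.
move=> r_latin r'_latin; rewrite /rect2_inner_dist !leq_min => /andP[/andP[hr hr'] hv].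
have row_far s : latin_row (m + m) s -> m.-1 <= row_inner_dist (m + m) s ->
    forall k, k.+1 < m + m -> far m (nth 0 s k) (nth 0 s k.+1).
  move=> s_latin hs k lt_k; have lt_k' : k < (m + m).-1 by lia.
  apply: far_of_dist; try (apply: (latin_row_nth s_latin); lia).
  by apply: leq_trans hs _; exact: (bigmin_ord_le _ _ (Ordinal lt_k')).
split=> //; try exact: row_far.
move=> k lt_k; apply: far_of_dist; try exact: latin_row_nth.
by apply: leq_trans hv _; exact: (bigmin_ord_le _ _ (Ordinal lt_k)).
Qed.

Lemma far_rectangle_flip m r r' : far_rectangle m r r' ->
  far_rectangle m (flip_row (m + m) r) (flip_row (m + m) r').
Proof.
case=> r_latin r'_latin hr hr' hv.
have nth_flip s k : latin_row (m + m) s -> k < m + m ->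
    nth 0 (flip_row (m + m) s) k = (m + m).+1 - nth 0 s ((m + m).-1 - k).
  by move=> s_latin; apply: nth_flip_row; exact: size_latin_row.
have le_nth s k : latin_row (m + m) s -> k < m + m -> nth 0 s k <= m + m.
  by move=> /latin_row_nth s_in /s_in /andP[].
have flip_far s : latin_row (m + m) s ->
    (forall k, k.+1 < m + m -> far m (nth 0 s k) (nth 0 s k.+1)) ->
    forall k, k.+1 < m + m ->
    far m (nth 0 (flip_row (m + m) s) k) (nth 0 (flip_row (m + m) s) k.+1).
  move=> s_latin hs k lt_k.
  rewrite !nth_flip // ?(ltnW lt_k) // (_ : (m + m).-1 - k = ((m + m).-1 - k.+1).+1); last lia.
  rewrite far_sym far_flip; try (apply: le_nth s_latin _; lia).
  by apply: hs; lia.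
split; try exact: latin_row_flip; try exact: flip_far.
move=> k lt_k; rewrite !nth_flip // far_flip; try (apply: le_nth r_latin _ || apply: le_nth r'_latin _; lia).
by apply: hv; lia.
Qed.

Record far_grid (m : nat) (f g : nat -> nat) : Prop := FarGrid {
  grid_ltf : forall k, k < m + m -> f k < m + m;
  grid_ltg : forall k, k < m + m -> g k < m + m;
  grid_injf : forall k k', k < m + m -> k' < m + m -> f k = f k' -> k = k';
  grid_injg : forall k k', k < m + m -> k' < m + m -> g k = g k' -> k = k';
  grid_farf : forall k, k.+1 < m + m -> far m (f k) (f k.+1);
  grid_farg : forall k, k.+1 < m + m -> far m (g k) (g k.+1);
  grid_farfg : forall k, k < m + m -> far m (f k) (g k) }.

Lemma far_grid_swap m f g : far_grid m f g -> far_grid m g f.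
Proof. by case=> *; split=> // k hk; rewrite far_sym; auto. Qed.

Section FarGrid.
Variables (m : nat) (f g : nat -> nat).
Hypotheses (m_gt2 : 2 < m) (G : far_grid m f g).

Lemma grid_neqf k k' : k < m + m -> k' < m + m -> k <> k' -> f k <> f k'.
Proof. by move=> hk hk' neq_kk' /(grid_injf G hk hk'). Qed.

Lemma grid_neqg k k' : k < m + m -> k' < m + m -> k <> k' -> g k <> g k'.
Proof. by move=> hk hk' neq_kk' /(grid_injg G hk hk'). Qed.

Lemma grid_block j : j.+1 < m + m -> f j = 0 -> f j.+1 = m.+1 ->
  resid (m + m) (g j.+1) (g j) = m.-1 -> g j = m.+1 /\ g j.+1 = 0.
Proof.
move=> lt_j fj fj1.
have lt_gj := grid_ltg G (ltnW lt_j); have lt_gj1 := grid_ltg G lt_j.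
rewrite residE; last lia.
have := grid_farfg G (ltnW lt_j); have := grid_farfg G lt_j.
by rewrite /far fj fj1; case: ifP; lia.
Qed.

Lemma grid_right_column j : j.+2 < m + m ->
  f j = 0 -> f j.+1 = m.+1 -> g j = m.+1 -> g j.+1 = 0 -> f j.+2 = 1 /\ g j.+2 = m.
Proof.
move=> lt_j fj fj1 gj gj1.
have fj2 : f j.+2 <> f j by apply: grid_neqf; lia.
have gj2 : g j.+2 <> g j by apply: grid_neqg; lia.
have := grid_ltf G lt_j; have := grid_ltg G lt_j; have := grid_farfg G lt_j.
have := grid_farf G lt_j; have := grid_farg G lt_j.
by rewrite /far fj1 gj1; lia.
Qed.

Lemma grid_left_column j : j.+2 < m + m ->
  f j.+1 = 0 -> f j.+2 = m.+1 -> g j.+1 = m.+1 -> g j.+2 = 0 -> f j = m /\ g j = 1.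
Proof.
move=> lt_j fj1 fj2 gj1 gj2.
have fj : f j <> f j.+2 by apply: grid_neqf; lia.
have gj : g j <> g j.+2 by apply: grid_neqg; lia.
have lt_j' : j.+1 < m + m by lia.
have := grid_ltf G (ltnW lt_j'); have := grid_ltg G (ltnW lt_j').
have := grid_farfg G (ltnW lt_j'); have := grid_farf G lt_j'; have := grid_farg G lt_j'.
by rewrite /far fj1 gj1; lia.
Qed.

Lemma grid_dead_end p0 p2 q c :
  p0 < m + m -> p2 < m + m -> q < m + m -> c < m + m -> c.+1 = q \/ q.+1 = c ->
  c <> p0 -> c <> p2 -> f p0 = 0 -> g p0 = m.+1 -> f p2 = 1 -> g p2 = m ->
  f q = m -> g q = 1 -> False.
Proof.
move=> lt_p0 lt_p2 lt_q lt_c adj_cq c_p0 c_p2 fp0 gp0 fp2 gp2 fq gq.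
have [far_fc far_gc] : far m (f q) (f c) /\ far m (g q) (g c).
  case: adj_cq => [cq | qc].
    have lt_c1 : c.+1 < m + m by rewrite cq.
    rewrite -cq far_sym (far_sym m (g c.+1)).
    by split; [exact: (grid_farf G lt_c1) | exact: (grid_farg G lt_c1)].
  by rewrite -qc in lt_c *; split; [exact: (grid_farf G lt_c) | exact: (grid_farg G lt_c)].
have fc : f c = (m + m).-1.
  have := grid_neqf lt_c lt_p0 c_p0; have := grid_neqf lt_c lt_p2 c_p2.
  by have := grid_ltf G lt_c; move: far_fc; rewrite /far fq fp0 fp2; lia.
have gc : g c = m.+2.
  have := grid_neqg lt_c lt_p0 c_p0; have := grid_neqg lt_c lt_p2 c_p2.
  by have := grid_ltg G lt_c; move: far_gc; rewrite /far gq gp0 gp2; lia.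
by have := grid_farfg G lt_c; rewrite fc gc /far; lia.
Qed.

End FarGrid.

Section Border.
Variables (m : nat) (f g : nat -> nat).
Hypotheses (m_gt2 : 2 < m) (G : far_grid m f g)
  (f_onto : forall x, x < m + m -> exists2 k, k < m + m & f k = x).

Lemma grid_border : f 0 = 0 -> f 1 = m.+1 -> g 0 = m.+1 -> g 1 = 0 -> False.
Proof.
move=> f0 f1 g0 g1; have [f2 g2] := grid_right_column m_gt2 G (j := 0) (ltac:(lia)) f0 f1 g0 g1.
have g_descends i : i <= m - 2 -> forall k, k < m + m -> f k = m - i -> g k = (m + m).-1 - i.
  elim/ltn_ind: i => i IH le_i k lt_k fk.
  have used i' : i' < i -> g k <> (m + m).-1 - i'.
    move=> lt_i' gk; have [k' lt_k' fk'] := f_onto (x := m - i') (ltac:(lia)).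
    have /(grid_injg G lt_k lt_k') eq_kk' : g k = g k' by rewrite gk (IH i') //; lia.
    by move: fk fk'; rewrite eq_kk'; lia.
  have k_ne1 : k <> 1 by move=> k1; move: fk; rewrite k1 f1; lia.
  have not_g1 : i = 0 -> g k <> 1.
    move=> i0 gk.
    have [lt_k1 | ge_k1] := ltnP k.+1 (m + m).
      by apply: (grid_dead_end m_gt2 G (p0 := 0) (p2 := 2) (q := k) (c := k.+1)) => //; lia.
    apply: (grid_dead_end m_gt2 G (p0 := 0) (p2 := 2) (q := k) (c := k.-1)) => //; lia.
  have := grid_neqg G lt_k (ltac:(lia) : 1 < m + m) k_ne1.
  have := used i.-1; have := used i.-2; have := grid_farfg G lt_k; have := grid_ltg G lt_k.
  by move: not_g1; rewrite /far fk g1; lia.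
have [k lt_k fk] := f_onto (x := 2) (ltac:(lia)).
have k0 : k = 0.
  apply: (grid_injg G lt_k (ltac:(lia) : 0 < m + m)).
  by rewrite g0 (g_descends (m - 2)) //; lia.
by move: fk; rewrite k0 f0.
Qed.

End Border.

Lemma grid_no_opposite_steps m f g j : 2 < m -> far_grid m f g ->
  (forall x, x < m + m -> exists2 k, k < m + m & f k = x) -> j < m ->
  f j = 0 -> f j.+1 = m.+1 -> resid (m + m) (g j.+1) (g j) = m.-1 -> False.
Proof.
move=> m_gt2 G f_onto lt_jm fj fj1 step_g.
have [gj gj1] := grid_block m_gt2 G (j := j) (ltac:(lia)) fj fj1 step_g.
have [fj2 gj2] := grid_right_column m_gt2 G (j := j) (ltac:(lia)) fj fj1 gj gj1.
case: j => [|j] in lt_jm step_g fj fj1 gj gj1 fj2 gj2 *; first exact: grid_border f_onto fj fj1 gj gj1.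
have [fj0 gj0] := grid_left_column m_gt2 G (j := j) (ltac:(lia)) fj fj1 gj gj1.
(* With the rows exchanged, columns j.+2, j, j.+3 read [0; m+1], [1; m], [m; 1]. *)
by apply: (grid_dead_end m_gt2 (far_grid_swap G) (p0 := j.+2) (p2 := j) (q := j.+3) (c := j.+4)); lia.
Qed.

Lemma far_grid_translate m r r' a : 0 < a <= m + m -> far_rectangle m r r' ->
  far_grid m (fun k => resid (m + m) (nth 0 r k) a) (fun k => resid (m + m) (nth 0 r' k) a).
Proof.
move=> a_in [r_latin r'_latin hr hr' hv].
have in_r := latin_row_nth r_latin; have in_r' := latin_row_nth r'_latin.
split=> [k _ | k _ | k k' hk hk' | k k' hk hk' | k lt_k | k lt_k | k lt_k] /=.
- by apply: resid_lt; lia.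
- by apply: resid_lt; lia.
- by move/(resid_inj a_in (in_r _ hk) (in_r _ hk')); exact: (latin_row_inj r_latin hk hk').
- by move/(resid_inj a_in (in_r' _ hk) (in_r' _ hk')); exact: (latin_row_inj r'_latin hk hk').
- by rewrite far_translate ?hr ?in_r //; lia.
- by rewrite far_translate ?hr' ?in_r' //; lia.
- by rewrite far_translate ?hv ?in_r ?in_r'.
Qed.

Lemma far_rectangle_no_opposite_steps m r r' j : 2 < m -> far_rectangle m r r' ->
  j.+1 < m + m -> resid (m + m) (nth 0 r j.+1) (nth 0 r j) = m.+1 ->
  resid (m + m) (nth 0 r' j.+1) (nth 0 r' j) = m.-1 -> False.
Proof.
move=> m_gt2; wlog lt_jm : r r' j / j < m => [wlog R lt_j step step' | R lt_j step step'].
  have [lt_jm|le_mj] := ltnP j m; first exact: (wlog r r' j lt_jm R lt_j step step').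
  have flip_step s : latin_row (m + m) s ->
      resid (m + m) (nth 0 (flip_row (m + m) s) ((m + m).-2 - j).+1)
                    (nth 0 (flip_row (m + m) s) ((m + m).-2 - j))
      = resid (m + m) (nth 0 s j.+1) (nth 0 s j).
    move=> s_latin; have [size_s in_s] := (size_latin_row s_latin, latin_row_nth s_latin).
    rewrite !nth_flip_row //; try lia.
    have -> : (m + m).-1 - ((m + m).-2 - j).+1 = j by lia.
    have -> : (m + m).-1 - ((m + m).-2 - j) = j.+1 by lia.
    by apply: resid_flip; [have := in_s j.+1 lt_j | have := in_s j (ltnW lt_j)]; lia.
  have [r_latin r'_latin _ _ _] := R.
  apply: (wlog (flip_row (m + m) r) (flip_row (m + m) r') ((m + m).-2 - j)); try lia.
  - exact: far_rectangle_flip.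
  - by rewrite flip_step.
  - by rewrite flip_step.
have [r_latin r'_latin _ _ _] := R.
have a_in := latin_row_nth r_latin (ltnW lt_j).
apply: (grid_no_opposite_steps m_gt2 (far_grid_translate a_in R) _ lt_jm) => /=.
- move=> c lt_c; have [x x_in <-] := resid_onto a_in lt_c.
  by have [k lt_k <-] := latin_row_onto r_latin x_in; exists k.
- exact: residnn.
- exact: step.
- by rewrite resid_translate // ?step' //; apply: (latin_row_nth r'_latin); lia.
Qed.

Lemma nth_ext_diff n r j : j < n.-1 ->
  nth 0%R (ext_diff n r) j = (Posz (resid n (nth 0%N r j.+1) (nth 0%N r j)) - Posz n./2)%R.
Proof.
move=> lt_j; rewrite /ext_diff nth_cat size_map size_iota lt_j.
by rewrite (nth_map 0) ?size_iota // nth_iota.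
Qed.

Theorem mainTheorem17 (n : nat) (hn : 6 <= n) (hev : ~~ odd n)
  (d d' : seq int) (hnb : neighbors n d d') :
  forall j : nat, j < n.-1 ->
    ~ (nth 0%R d j = 1%R /\ nth 0%R d' j = (-1)%R) /\
    ~ (nth 0%R d j = (-1)%R /\ nth 0%R d' j = 1%R).
Proof.
case: hnb => r [r' [[r_latin r'_latin _ _] [<- <- _ inner]]].
have [m n_mm] : exists m, n = m + m.
  by exists n./2; rewrite -{1}(odd_double_half n) (negbTE hev) add0n addnn.
subst n; have half_m : (m + m)./2 = m by rewrite addnn doubleK.
have m_gt2 : 2 < m by lia.
have R : far_rectangle m r r'.
  by apply: far_rectangle_of_inner_dist; rewrite // inner half_m subn1.
move=> j lt_j; rewrite !nth_ext_diff // half_m; split=> -[step step'].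
- by apply: (far_rectangle_no_opposite_steps m_gt2 R (j := j)); lia.
- by apply: (far_rectangle_no_opposite_steps m_gt2 (far_rectangle_sym R) (j := j)); lia.
Qed.
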